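(* Let $n\geq 3$, $d\geq 2$ and $\ell\in\textup{int}(C_n)$. Then $V_d(\ell)$ contains $k$-dimensional polygons for every $k\in\{2,\ldots,\min\{d,n-1\}\}$.
   Context: $C_n$ is the set of $\ell=(l_1,\ldots,l_n)\in\mathbb{R}^n$ with $l_i>0$ and $l_i\leq\sum_{j\neq i}l_j$ for all $i$; $\textup{int}(C_n)$ is its interior (all these inequalities strict). $V_d(\ell)=\{(\mathbf{v}_1,\ldots,\mathbf{v}_{n-1})\in(\mathbb{R}^d)^{n-1} : \|\mathbf{v}_i-\mathbf{v}_{i-1}\|=l_i,\ i=1,\ldots,n\}$ with $\mathbf{v}_0=\mathbf{v}_n=\mathbf{0}$. The dimension of $P=(\mathbf{v}_1,\ldots,\mathbf{v}_{n-1})$ is the dimension of the linear span of its vertices $\mathbf{v}_1,\ldots,\mathbf{v}_{n-1}$. *)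

From HB Require Import structures.
From mathcomp Require Import all_boot all_order all_algebra.
From mathcomp Require Import reals.
Set Implicit Arguments. Unset Strict Implicit. Unset Printing Implicit Defensive.
Import Order.TTheory GRing.Theory Num.Theory.
Local Open Scope ring_scope.

Definition enorm (R : realType) (d : nat) (v : 'rV[R]_d) : R :=
  Num.sqrt (\sum_(j < d) v 0 j ^+ 2).

(* Side lengths l_1..l_n are stored as l : 'I_n -> R with l_{i+1} = l i. *)
Definition in_Cn (R : realType) (n : nat) (l : 'I_n -> R) : Prop :=
  forall i : 'I_n, 0 < l i /\ l i <= \sum_(j < n | j != i) l j.
Definition in_int_Cn (R : realType) (n : nat) (l : 'I_n -> R) : Prop :=
  forall i : 'I_n, 0 < l i /\ l i < \sum_(j < n | j != i) l j.

(* A polygon P = (v_1,...,v_{n-1}) is a matrix with n-1 rows: row k is v_{k+1}.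
   vtx P i is v_i for 0 <= i <= n, with v_0 = v_n = 0. *)
Definition vtx (R : realType) (n d : nat) (P : 'M[R]_(n.-1, d)) (i : nat)
  : 'rV[R]_d :=
  match insub i.-1 with
  | Some k => if i == 0%N then 0 else row k P
  | None => 0
  end.

Definition in_Vd (R : realType) (n d : nat) (l : 'I_n -> R)
  (P : 'M[R]_(n.-1, d)) : Prop :=
  forall i : 'I_n, enorm (vtx P i.+1 - vtx P i) = l i.

(* Dimension of P = dimension of the linear span of v_1..v_{n-1}
   = rank of the matrix whose rows are these vertices. *)
Definition poly_dim (R : realType) (n d : nat) (P : 'M[R]_(n.-1, d)) : nat :=
  \rank P.

From mathcomp Require Import all_boot all_order all_algebra.
From mathcomp Require Import reals.
From mathcomp Require Import ring lra zify.
Set Implicit Arguments. Unset Strict Implicit. Unset Printing Implicit Defensive.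
Import Order.TTheory GRing.Theory Num.Theory.
Local Open Scope ring_scope.

(* Work with the edge vectors f_i = v_(i+1) - v_i: they have lengths l_i, sum to
   zero and span the same space as the vertices.  For n = 3 the triangle with
   sides l_1, l_2, l_3 exists since l is interior.  For larger n, merge the last
   two sides into one side c with |l_(n-1) - l_n| < c < l_(n-1) + l_n, chosen so
   that the shortened length vector is still interior; a polygon for it exists by
   induction, and its last edge is split back into two edges of lengths l_(n-1)
   and l_n by erecting a triangle over it in a unit direction e orthogonal to it.
   Taking e inside the span of the polygon keeps its dimension, taking e along a
   fresh coordinate axis raises it by one; keeping the span equal to the first k
   coordinate axes, every dimension k <= min(d, n-1) is reached. *)

Section CoordinateSubspaces.
Context {F : fieldType} {d : nat}.

Lemma row_pid_mx (i : 'I_d) r :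
  row i (pid_mx r : 'M[F]_d) = if (i < r)%N then 'e_i else 0.
Proof.
apply/rowP => j; rewrite !mxE; case: ifP => ir; last by rewrite andbF mxE.
by rewrite andbT mxE eqxx /= eq_sym.
Qed.

Lemma delta_sub_pid_mx (j : 'I_d) r :
  (j < r)%N -> (('e_j : 'rV[F]_d) <= (pid_mx r : 'M_d))%MS.
Proof. by move=> jr; apply: (eq_row_sub j); rewrite row_pid_mx jr. Qed.

Lemma sub_pid_mx_coord (v : 'rV[F]_d) r (j : 'I_d) :
  (v <= (pid_mx r : 'M[F]_d))%MS -> (r <= j)%N -> v 0 j = 0.
Proof.
move=> /submxP [D ->] rj; rewrite mxE big1 // => i _.
rewrite mxE; case: eqP => [-> | _] /=; last by rewrite mulr0.
by rewrite ltnNge rj mulr0.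
Qed.

Lemma pid_mxS (j : 'I_d) :
  ((pid_mx j.+1 : 'M[F]_d) :=: (pid_mx j : 'M_d) + ('e_j : 'rV_d))%MS.
Proof.
apply/eqmxP/andP; split.
  apply/row_subP => i; rewrite row_pid_mx ltnS leq_eqVlt.
  case: eqP => [/val_inj -> | _] /=; first exact: addsmxSr.
  by case: ifP => ij; rewrite ?sub0mx // (submx_trans _ (addsmxSl _ _)) ?delta_sub_pid_mx.
rewrite addsmx_sub delta_sub_pid_mx // andbT; apply/row_subP => i.
by rewrite row_pid_mx; case: ifP => ij; rewrite ?sub0mx // delta_sub_pid_mx // ltnW.
Qed.

End CoordinateSubspaces.

Section InnerProduct.
Variables (R : realType) (d : nat).
Implicit Types u v w e : 'rV[R]_d.

Definition dot u v : R := \sum_(j < d) u 0 j * v 0 j.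

Lemma dotC u v : dot u v = dot v u.
Proof. by apply: eq_bigr => j _; rewrite mulrC. Qed.

Lemma dotDl u v w : dot (u + v) w = dot u w + dot v w.
Proof. by rewrite /dot -big_split; apply: eq_bigr => j _; rewrite mxE mulrDl. Qed.

Lemma dotZl a u w : dot (a *: u) w = a * dot u w.
Proof. by rewrite /dot mulr_sumr; apply: eq_bigr => j _; rewrite mxE mulrA. Qed.

Lemma dotNl u w : dot (- u) w = - dot u w.
Proof. by rewrite -scaleN1r dotZl mulN1r. Qed.

Lemma dotBl u v w : dot (u - v) w = dot u w - dot v w.
Proof. by rewrite dotDl dotNl. Qed.

Lemma dotDr u v w : dot w (u + v) = dot w u + dot w v.
Proof. by rewrite dotC dotDl !(dotC w). Qed.

Lemma dotZr a u w : dot w (a *: u) = a * dot w u.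
Proof. by rewrite dotC dotZl dotC. Qed.

Lemma dotNr u w : dot w (- u) = - dot w u.
Proof. by rewrite dotC dotNl dotC. Qed.

Lemma dot_delta (j : 'I_d) v : dot 'e_j v = v 0 j.
Proof.
rewrite /dot (bigD1 j) //= mxE !eqxx mul1r big1 ?addr0 // => i /negbTE ij.
by rewrite mxE ij mul0r.
Qed.

Lemma enorm_dot v a : 0 <= a -> dot v v = a ^+ 2 -> enorm v = a.
Proof.
move=> a0 vva; rewrite /enorm (eq_bigr (fun j => v 0 j * v 0 j)) => [|j _].
  by rewrite -/(dot v v) vva sqrtr_sqr ger0_norm.
by rewrite expr2.
Qed.

Lemma triangle_apex w e (a b c : R) :
  0 < a -> 0 < b -> `|a - b| < c < a + b ->
  dot w w = c ^+ 2 -> dot e e = 1 -> dot e w = 0 ->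
  exists t h : R, [/\ h != 0, dot (h *: e + t *: w) (h *: e + t *: w) = a ^+ 2
                   & dot (w - (h *: e + t *: w)) (w - (h *: e + t *: w)) = b ^+ 2].
Proof.
move=> a0 b0 /andP [abc cab] ww ee ew.
have c0 : 0 < c by apply: le_lt_trans abc.
have we : dot w e = 0 by rewrite dotC.
(* The apex is h e + t w: by the law of cosines its foot divides w in the ratio
   t, and s = h ^+ 2 is its squared height, positive by Heron's formula. *)
pose t := (a ^+ 2 - b ^+ 2 + c ^+ 2) / (2 * c ^+ 2).
pose s := a ^+ 2 - t ^+ 2 * c ^+ 2.
have s0 : 0 < s.
  have -> : s = (a + b + c) * (b - a + c) * (a - b + c) * (a + b - c) / (4 * c ^+ 2).
    by rewrite /s /t; field; rewrite gt_eqF.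
  move: abc; rewrite ltr_norml => /andP [abc1 abc2].
  have [f1 f2 f3] : [/\ 0 < b - a + c, 0 < a - b + c & 0 < a + b - c] by split; lra.
  have f0 : 0 < a + b + c by rewrite !addr_gt0.
  by rewrite divr_gt0 ?mulr_gt0 ?exprn_gt0.
exists t, (Num.sqrt s).
have hh : Num.sqrt s ^+ 2 = s by rewrite sqr_sqrtr // ltW.
rewrite sqrtr_eq0 -ltNge s0; split => //.
  rewrite !(dotDl, dotDr, dotZl, dotZr) ee ew we ww.
  transitivity (t ^+ 2 * c ^+ 2 + Num.sqrt s ^+ 2); first by ring.
  by rewrite hh /s; ring.
rewrite !(dotDl, dotDr, dotNl, dotNr, dotZl, dotZr) ee ew we ww.
transitivity ((1 - t) ^+ 2 * c ^+ 2 + Num.sqrt s ^+ 2); first by ring.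
by rewrite hh /s /t; field; rewrite gt_eqF.
Qed.

Lemma exists_unit_orthogonal w (i j : 'I_d) : i != j ->
  exists e, [/\ dot e e = 1, dot e w = 0 & (e <= ('e_i : 'rV_d) + ('e_j : 'rV_d))%MS].
Proof.
move=> /negbTE ij; have ji : (j == i) = false by rewrite eq_sym.
have [wi0 | wi_neq0] := eqVneq (w 0 i) 0.
  by exists 'e_i; rewrite !dot_delta mxE !eqxx wi0 addsmxSl.
pose r := Num.sqrt (w 0 i ^+ 2 + w 0 j ^+ 2).
have r2 : r ^+ 2 = w 0 i ^+ 2 + w 0 j ^+ 2 by rewrite sqr_sqrtr // addr_ge0 ?sqr_ge0.
have r_neq0 : r != 0.
  by rewrite sqrtr_eq0 -ltNge ltr_pwDl ?sqr_ge0 // exprn_even_gt0 //= wi_neq0.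
exists ((w 0 i / r) *: 'e_j - (w 0 j / r) *: 'e_i); split.
- rewrite dotBl !dotZl !dot_delta !mxE !eqxx ij ji /=.
  transitivity ((w 0 i ^+ 2 + w 0 j ^+ 2) / r ^+ 2); first by field.
  by rewrite -r2 divff // expf_neq0.
- by rewrite dotBl !dotZl !dot_delta; field.
- by rewrite addmx_sub // ?scalemx_sub -?scaleN1r ?scalemx_sub ?addsmxSl ?addsmxSr.
Qed.

End InnerProduct.

Section SideLengths.
Variable R : realType.
Implicit Type L : nat -> R.

(* int(C_n) for lengths indexed by nat: l_i < sum_(j != i) l_j iff 2 l_i < sum_j l_j. *)
Definition interior_lengths n L :=
  forall i, (i < n)%N -> 0 < L i /\ 2 * L i < \sum_(j < n) L j.

Lemma ltr_term_psumr (I : finType) (F : I -> R) (i i' : I) :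
  i != i' -> (forall j, 0 < F j) -> F i < \sum_j F j.
Proof.
move=> ii' F_gt0; rewrite (bigD1 i) //= (bigD1 i') 1?eq_sym //= ltrDl.
by rewrite ltr_pwDl ?sumr_ge0 // => j _; apply: ltW.
Qed.

Lemma interior_lengths_merge m L : (2 <= m)%N -> interior_lengths m.+2 L ->
  exists c, `|L m - L m.+1| < c < L m + L m.+1 /\
            interior_lengths m.+1 (fun i => if i == m then c else L i).
Proof.
move=> m2 HL; set a := L m; set b := L m.+1; set S := \sum_(i < m) L i.
have sumE : \sum_(j < m.+2) L j = S + a + b by rewrite !big_ord_recr.
have [a0 a_lt] := HL m (ltnW (ltnSn _)); have [b0 b_lt] := HL m.+1 (ltnSn _).
rewrite sumE -/a -/b in a0 a_lt b0 b_lt.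
have L_lt : forall i, (i < m)%N -> 0 < L i /\ 2 * L i < S + a + b.
  by move=> i im; rewrite -sumE; apply: HL; lia.
have L_lt_S : forall i, (i < m)%N -> L i < S.
  move=> i im; have m0 : (0 < m)%N by apply: ltnW.
  have [i' ii'] : exists i' : 'I_m, Ordinal im != i'.
    by case: (eqVneq i 0%N) => i0; [exists (Ordinal m2) | exists (Ordinal m0)];
      rewrite -val_eqE /= ?i0.
  apply: (ltr_term_psumr (F := fun j : 'I_m => L j) ii') => j.
  by case: (L_lt j (ltn_ord j)).
(* Interiority of the merged lengths asks for max(|a - b|, 2 L i - S) < c and
   c < min(a + b, S); take the midpoint. *)
set lo := \big[Num.max/`|a - b|]_(i < m) (2 * L i - S).
set hi := Num.min (a + b) S.
have lo_hi : lo < hi.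
  apply/bigmax_ltP; split.
    by rewrite lt_min !ltr_norml; apply/andP; split; apply/andP; split; lra.
  move=> i _; have [] := L_lt i (ltn_ord i); have := L_lt_S i (ltn_ord i).
  by rewrite lt_min => ? ? ?; apply/andP; split; lra.
exists ((lo + hi) / 2).
have ab_lo : `|a - b| <= lo by apply: bigmax_ge_id.
have L_lo : forall i : 'I_m, 2 * L i - S <= lo by move=> i; apply: le_bigmax.
have [hi_ab hi_S] : hi <= a + b /\ hi <= S by rewrite !ge_min !lexx orbT.
split.
  by apply/andP; split; [apply: le_lt_trans ab_lo _ |]; lra.
have sumE' : \sum_(j < m.+1) (if j == m :> nat then (lo + hi) / 2 else L j)
              = S + (lo + hi) / 2.
  by rewrite big_ord_recr /= eqxx; congr (_ + _); apply: eq_bigr => j _; rewrite ltn_eqF.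
move=> i; rewrite sumE' ltnS leq_eqVlt => /orP [/eqP -> | im]; rewrite ?eqxx.
  by have := normr_ge0 (a - b); split; lra.
rewrite ltn_eqF //; have [Li0 _] := L_lt i im; have := L_lo (Ordinal im).
by split; lra.
Qed.

End SideLengths.

Section EdgeVectors.
Variables (R : realType) (d : nat).
Implicit Types (L : nat -> R) (f : nat -> 'rV[R]_d).

Definition edges n f : 'M[R]_(n, d) := \matrix_(i < n) f i.

Lemma edge_sub n f i : (i < n)%N -> (f i <= edges n f)%MS.
Proof. by move=> i_n; apply: (eq_row_sub (Ordinal i_n)); rewrite rowK. Qed.

Definition polygon_edges n L k f :=
  [/\ forall i, (i < n)%N -> dot (f i) (f i) = L i ^+ 2,
      \sum_(i < n) f i = 0 & (edges n f :=: (pid_mx k : 'M_d))%MS].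

Definition split_edge n f u i : 'rV[R]_d :=
  if (i < n)%N then f i else if i == n then u else f n - u.

Lemma sum_split_edge n f u :
  \sum_(i < n.+2) split_edge n f u i = \sum_(i < n.+1) f i.
Proof.
rewrite !big_ord_recr /= /split_edge ltnn eqxx ltnNge leqnSn gtn_eqF //=.
rewrite -addrA [u + _]addrC subrK; congr (_ + _).
by apply: eq_bigr => i _; rewrite ltn_ord.
Qed.

Lemma edges_split_edge n f e (t h : R) : h != 0 ->
  (edges n.+2 (split_edge n f (h *: e + t *: f n)) :=: edges n.+1 f + e)%MS.
Proof.
set u := h *: e + t *: f n; set g := split_edge n f u => h0.
have u_sub : (u <= edges n.+1 f + e)%MS.
  rewrite addmx_sub ?scalemx_sub ?addsmxSr //.
  by rewrite (submx_trans _ (addsmxSl _ _)) ?edge_sub.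
have fn_sub : (f n <= edges n.+1 f + e)%MS.
  exact: submx_trans (edge_sub _ (ltnSn n)) (addsmxSl _ _).
have gnn : g n + g n.+1 = f n.
  by rewrite /g /split_edge ltnn eqxx ltnNge leqnSn gtn_eqF //= addrC subrK.
apply/eqmxP/andP; split.
  apply/row_subP => i; rewrite rowK /g /split_edge.
  case: ltnP => [i_n | n_i].
    by rewrite (submx_trans _ (addsmxSl _ _)) ?edge_sub // ltnW.
  by case: eqP => _; rewrite ?u_sub // addmx_sub // -scaleN1r scalemx_sub.
rewrite addsmx_sub; apply/andP; split.
  apply/row_subP => i; rewrite rowK; case: (ltngtP i n) => [i_n | | i_n].
  - have -> : f i = g i by rewrite /g /split_edge i_n.
    by rewrite edge_sub // ltnW // ltnW.
  - by have := ltn_ord i; lia.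
  - by rewrite i_n -gnn addmx_sub ?edge_sub.
have -> : e = h^-1 *: (g n - t *: (g n + g n.+1)).
  by rewrite gnn {1}/g /split_edge ltnn eqxx /u addrK scalerA mulVf // scale1r.
rewrite scalemx_sub // addmx_sub ?edge_sub // -scaleN1r !scalemx_sub //.
by rewrite addmx_sub ?edge_sub.
Qed.

Lemma polygon_edges_split n L c k k' f e :
  polygon_edges n.+1 (fun i => if i == n then c else L i) k f ->
  0 < L n -> 0 < L n.+1 -> `|L n - L n.+1| < c < L n + L n.+1 ->
  dot e e = 1 -> dot e (f n) = 0 ->
  ((pid_mx k' : 'M_d) :=: (pid_mx k : 'M_d) + e)%MS ->
  exists f', polygon_edges n.+2 L k' f'.
Proof.
case=> len sum0 span a0 b0 abc ee ew pidE.
have fn : dot (f n) (f n) = c ^+ 2 by rewrite len // eqxx.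
have [t [h [h0 ua ub]]] := triangle_apex a0 b0 abc fn ee ew.
exists (split_edge n f (h *: e + t *: f n)); split.
- move=> i; rewrite /split_edge; case: (ltngtP i n) => [i_n _ | n_i | -> _].
  + by rewrite len ?ltn_eqF // ltnW.
  + by rewrite ltnS leq_eqVlt ltnNge n_i orbF => /eqP ->.
  + by [].
- by rewrite sum_split_edge.
- apply: eqmx_trans (edges_split_edge n f e t h0) _.
  exact: eqmx_trans (adds_eqmx span (eqmx_refl e)) (eqmx_sym pidE).
Qed.

Lemma polygon_edges_digon L (j : 'I_d) :
  j = 0%N :> nat -> 0 < L 0%N -> L 1%N = L 0%N ->
  polygon_edges 2 L 1 (fun i => if i == 0%N then L 0%N *: 'e_j else - (L 0%N *: 'e_j)).
Proof.
move=> j0 L0 L1; split.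
- move=> [|[|//]] _ /=; rewrite ?dotNl ?dotNr ?opprK ?L1 dotZl dotZr dot_delta mxE !eqxx;
  by rewrite mulr1 expr2.
- by rewrite !big_ord_recr big_ord0 /= add0r subrr.
- have -> : (pid_mx 1 : 'M_d) = pid_mx j.+1 by rewrite j0.
  apply: eqmx_trans (eqmx_sym (pid_mxS j)); rewrite j0 pid_mx_0.
  apply: eqmx_trans (eqmx_sym (adds0mx _ _)).
  apply/eqmxP/andP; split.
    by apply/row_subP => i; rewrite rowK; case: ifP => _; rewrite -?scaleN1r ?scalemx_sub.
  have ejE : ('e_j : 'rV[R]_d) = (L 0%N)^-1 *: (L 0%N *: 'e_j).
    by rewrite scalerA mulVf ?gt_eqF // scale1r.
  by rewrite {1}ejE; apply: scalemx_sub; apply: (eq_row_sub 0); rewrite rowK.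
Qed.

Lemma polygon_edges_triangle L : (2 <= d)%N -> interior_lengths 3 L ->
  exists f, polygon_edges 3 L 2 f.
Proof.
move=> d2 HL; have d0 : (0 < d)%N by apply: ltnW.
have [L0 L0_lt] := HL 0%N isT; have [L1 L1_lt] := HL 1%N isT.
have [L2 L2_lt] := HL 2%N isT.
rewrite !big_ord_recr big_ord0 /= add0r in L0_lt L1_lt L2_lt.
pose j0 : 'I_d := Ordinal d0; pose j1 : 'I_d := Ordinal d2.
have digon := @polygon_edges_digon (fun i => if i == 1%N then L 0%N else L i)
  j0 erefl L0 erefl.
apply: (polygon_edges_split digon L1 L2 _ _ _ (pid_mxS j1)) => /=.
- by rewrite ltr_norml; apply/andP; split; lra.
- by rewrite dot_delta mxE eqxx.
- by rewrite dot_delta !mxE /= mulr0 oppr0.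
Qed.

Lemma polygon_edges_exist m L k : interior_lengths m.+3 L ->
  (2 <= k)%N -> (k <= d)%N -> (k <= m.+2)%N -> exists f, polygon_edges m.+3 L k f.
Proof.
elim: m L k => [|m IH] L k HL k2 kd km.
  have -> : k = 2%N by lia.
  exact: polygon_edges_triangle (leq_trans k2 kd) HL.
have [c [abc HL']] := interior_lengths_merge (isT : (2 <= m.+2)%N) HL.
have [a0 _] := HL m.+2 (ltnW (ltnSn _)); have [b0 _] := HL m.+3 (ltnSn _).
case: (ltnP k m.+3) => [k_small | k_big].
  have [f Hf] := IH _ _ HL' k2 kd k_small.
  have k0 : (0 < k)%N by apply: ltnW.
  pose j0 : 'I_d := Ordinal (leq_trans k0 kd).
  pose j1 : 'I_d := Ordinal (leq_trans k2 kd).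
  have j01 : j0 != j1 by rewrite -val_eqE.
  have [e [ee ew e_sub]] := exists_unit_orthogonal (f m.+2) j01.
  apply: (polygon_edges_split Hf a0 b0 abc ee ew); apply: eqmx_sym; apply/addsmx_idPl.
  by apply: submx_trans e_sub _; rewrite addsmx_sub !delta_sub_pid_mx.
have k_eq : k = m.+3 by lia.
have jd : (m.+2 < d)%N by lia.
have [f Hf] := IH _ _ HL' (isT : (2 <= m.+2)%N) (ltnW jd) (leqnn _).
have [_ _ span] := Hf; pose j : 'I_d := Ordinal jd.
apply: (polygon_edges_split Hf a0 b0 abc (e := 'e_j)).
- by rewrite dot_delta mxE !eqxx.
- rewrite dot_delta (@sub_pid_mx_coord _ _ _ m.+2) //.
  by rewrite -span edge_sub.
- by rewrite k_eq; exact: (pid_mxS j).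
Qed.

End EdgeVectors.

Lemma interior_lengths_of_int_Cn (R : realType) n (l : 'I_n.+1 -> R) :
  in_int_Cn l -> interior_lengths n.+1 (fun i => l (inord i)).
Proof.
move=> Hl i i_n; pose i' := Ordinal i_n; have [li0 li_lt] := Hl i'.
have lE : forall j : 'I_n.+1, l (inord j) = l j by move=> j; rewrite inord_val.
rewrite (eq_bigr _ (fun j _ => lE j)) (bigD1 i') //= -[i]/(nat_of_ord i') lE.
by split => //; lra.
Qed.

Section Vertices.
Variables (R : realType) (d : nat).
Implicit Type f : nat -> 'rV[R]_d.

Definition polygon_of_edges n f : 'M[R]_(n.-1, d) :=
  \matrix_(i < n.-1) \sum_(j < i.+1) f j.

Lemma vtx_sub n (P : 'M[R]_(n.-1, d)) i : (vtx P i <= P)%MS.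
Proof.
rewrite /vtx; case: insubP => [k _ _|_]; last exact: sub0mx.
by case: eqP => _; [exact: sub0mx | exact: row_sub].
Qed.

Lemma vtx_polygon_of_edges n f i : \sum_(j < n) f j = 0 -> (i <= n)%N ->
  vtx (polygon_of_edges n f) i = \sum_(j < i) f j.
Proof.
move=> sum0 i_n; rewrite /vtx; case: insubP => [k _ kE | ].
  case: eqP => [-> | /eqP i0]; first by rewrite big_ord0.
  by rewrite rowK kE prednK // lt0n.
case: i i_n => [_ _ | i i_n ni]; first by rewrite big_ord0.
rewrite /= ltn_predRL in ni.
by have -> : i.+1 = n by apply/eqP; rewrite eqn_leq i_n leqNgt.
Qed.

Lemma edge_polygon_of_edges n f i : \sum_(j < n) f j = 0 -> (i < n)%N ->
  vtx (polygon_of_edges n f) i.+1 - vtx (polygon_of_edges n f) i = f i.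
Proof.
move=> sum0 i_n; rewrite !vtx_polygon_of_edges ?(ltnW i_n) //.
by rewrite big_ord_recr /= addrAC subrr add0r.
Qed.

Lemma polygon_of_edges_eqmx n f : \sum_(j < n) f j = 0 ->
  (polygon_of_edges n f :=: edges n f)%MS.
Proof.
move=> sum0; apply/eqmxP/andP; split; apply/row_subP => i; rewrite rowK.
  apply: summx_sub => j _; apply: edge_sub.
  exact: leq_trans (ltn_ord j) (leq_trans (ltn_ord i) (leq_pred n)).
rewrite -(edge_polygon_of_edges sum0 (ltn_ord i)).
by rewrite addmx_sub ?vtx_sub // -scaleN1r scalemx_sub ?vtx_sub.
Qed.

End Vertices.

Theorem proposition3p3 (R : realType) (n d : nat) (l : 'I_n -> R) :
  (3 <= n)%N -> (2 <= d)%N -> in_int_Cn l ->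
  forall k : nat, (2 <= k)%N -> (k <= minn d n.-1)%N ->
  exists P : 'M[R]_(n.-1, d), in_Vd l P /\ poly_dim P = k.
Proof.
case: n l => [|[|[|m]]] // l _ _ Hl k k2; rewrite leq_min => /andP [kd km].
have [f [len sum0 span]] :=
  polygon_edges_exist (interior_lengths_of_int_Cn Hl) k2 kd km.
exists (polygon_of_edges m.+3 f); split.
  move=> i; rewrite edge_polygon_of_edges //; apply: enorm_dot.
    exact/ltW/(Hl i).1.
  by rewrite len // inord_val.
by rewrite /poly_dim (polygon_of_edges_eqmx sum0) span rank_pid_mx.
Qed.
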